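(* Let $a>0$ and $p\in(2,+\infty)$. Let $x\in C^0(\mathbb{R}_+\times[0,1])\cap C^{1,2}((0,\infty)\times(0,1))$, with $x[t]:=x(t,\cdot)\in C^2([0,1])$ for all $t\ge0$, be a classical solution of $\partial_tx(t,z)=a\,\partial_z^2x(t,z)$ on $(0,\infty)\times(0,1)$ with $x(t,0)=x(t,1)=0$ for $t\ge0$ and $x(0,\cdot)=x_0\in C^2([0,1])$. Then for all $t\ge0$, $\|x[t]\|_p\le e^{-a(p-1)\frac{4\pi^2}{p^2}t}\|x_0\|_p$, where $\|g\|_p=\left(\int_0^1|g(z)|^pdz\right)^{1/p}$. *)

From Stdlib Require Import Reals Lra ClassicalEpsilon.
Open Scope R_scope.

(* Power with a real exponent, with the convention 0^b = 0 (Stdlib's Rpower 0 b = 1). *)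
Definition rpow (a b : R) : R := if Rlt_dec 0 a then Rpower a b else 0.

(* Riemann integral over [0,1] (0 if f is not Riemann integrable). *)
Definition RInt01 (f : R -> R) : R :=
  match excluded_middle_informative (inhabited (Riemann_integrable f 0 1)) with
  | left H => RiemannInt (epsilon H (fun _ => True))
  | right _ => 0
  end.

Definition Lpnorm (g : R -> R) (p : R) : R :=
  rpow (RInt01 (fun z => rpow (Rabs (g z)) p)) (1 / p).

Definition cont2_on (D : R -> R -> Prop) (f : R -> R -> R) : Prop :=
  forall t z, D t z -> forall eps, 0 < eps -> exists delta, 0 < delta /\
    forall s w, D s w -> Rabs (s - t) < delta -> Rabs (w - z) < delta ->
      Rabs (f s w - f t z) < eps.

Definition deriv01 (f : R -> R) (z l : R) : Prop :=
  limit1_in (fun h => (f h - f z) / (h - z)) (fun h => 0 <= h <= 1 /\ h <> z) l z.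

Definition cont01 (f : R -> R) (z : R) : Prop :=
  limit1_in f (fun h => 0 <= h <= 1) (f z) z.

Definition C2_01 (f : R -> R) : Prop :=
  exists f1 f2 : R -> R,
    (forall z, 0 <= z <= 1 -> deriv01 f z (f1 z) /\ deriv01 f1 z (f2 z) /\ cont01 f2 z).

(* Let E(t) = int_0^1 |x(t,z)|^p dz.  Formally
     E' = a p int |x|^(p-2) x x_zz = - a p (p-1) int |x|^(p-2) x_z^2
        = - (4 a (p-1) / p) int ((|x|^(p/2))_z)^2 <= - lam E,   lam = 4 a (p-1) pi^2 / p,
   by Wirtinger's inequality, so exp (lam t) E(t) is nonincreasing and taking p-th roots
   gives the bound.  The derivatives of x are only controlled on the open strip, so the
   integrations by parts are done against a trapezoidal cutoff vanishing near z = 0 and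
   z = 1, and Wirtinger's inequality is obtained pointwise by completing a square with
   the weight pi cot(pi z).  The maximum principle keeps |x(t,z)| below B z (1 - z) on
   compact time intervals away from 0, which makes the cutoff errors O(eta); letting
   eta -> 0 gives monotonicity for t > 0, and right continuity of E at 0 extends it. *)

From Coquelicot Require Import Coquelicot.
From Stdlib Require Import Reals Lra Psatz ClassicalEpsilon.
Open Scope R_scope.

(** * The powers |y|^p *)

Lemma rpow_nonneg a b : 0 <= rpow a b.
Proof. unfold rpow; destruct (Rlt_dec 0 a); [left; apply exp_pos | lra]. Qed.

(* |y|^(p-2), |y|^(p-2) y and |y|^p, written as products so that
   powP' = p powV and powV' = (p-1) powW. *)
Definition powW (p y : R) : R := rpow (Rabs y) (p - 2).
Definition powV (p y : R) : R := powW p y * y.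
Definition powP (p y : R) : R := powV p y * y.

Lemma powW_nonneg p y : 0 <= powW p y.
Proof. apply rpow_nonneg. Qed.

Lemma powP_nonneg p y : 0 <= powP p y.
Proof. unfold powP, powV. pose proof (powW_nonneg p y). nra. Qed.

Lemma powW_0 p : powW p 0 = 0.
Proof. unfold powW, rpow. rewrite Rabs_R0. destruct (Rlt_dec 0 0); lra. Qed.

Lemma powW_abs p y : 0 < Rabs y -> powW p y = Rpower (Rabs y) (p - 2).
Proof. intros Hy. unfold powW, rpow. destruct (Rlt_dec 0 (Rabs y)); lra. Qed.

Lemma powW_le_1 p y : 2 < p -> Rabs y <= 1 -> powW p y <= 1.
Proof.
  intros Hp Hy. unfold powW, rpow. destruct (Rlt_dec 0 (Rabs y)) as [Hy0|]; [|lra].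
  unfold Rpower. rewrite <- exp_0.
  destruct (Rle_lt_or_eq_dec _ _ Hy) as [Hlt|Heq].
  - left. apply exp_increasing.
    assert (ln (Rabs y) < 0) by (rewrite <- ln_1; apply ln_increasing; lra). nra.
  - rewrite Heq, ln_1, Rmult_0_r. lra.
Qed.

Lemma powP_le_sqr p y c : 2 < p -> Rabs y <= c -> c <= 1 -> powP p y <= c * c.
Proof.
  intros Hp Hy Hc. unfold powP, powV.
  pose proof (powW_le_1 p y Hp ltac:(lra)). pose proof (powW_nonneg p y).
  assert (y * y <= c * c).
  { rewrite <- (Rabs_pos_eq (y * y)), Rabs_mult by nra. pose proof (Rabs_pos y). nra. }
  nra.
Qed.

Lemma powW_small p : 2 < p -> forall eps, 0 < eps ->
  exists d, 0 < d /\ forall h, Rabs h < d -> powW p h < eps.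
Proof.
  intros Hp eps He. exists (exp (ln eps / (p - 2))). split; [apply exp_pos|].
  intros h Hh. unfold powW, rpow. destruct (Rlt_dec 0 (Rabs h)); [|lra].
  unfold Rpower. rewrite <- (exp_ln eps He). apply exp_increasing.
  assert (Hl : ln (Rabs h) < ln eps / (p - 2)).
  { rewrite <- (ln_exp (ln eps / (p - 2))). apply ln_increasing; lra. }
  apply Rmult_lt_compat_l with (r := p - 2) in Hl; [|lra].
  replace ((p - 2) * (ln eps / (p - 2))) with (ln eps) in Hl by (field; lra). lra.
Qed.

Lemma is_derive_continuity_pt (f : R -> R) y l : is_derive f y l -> continuity_pt f y.
Proof.
  intros H. apply derivable_continuous_pt. exists l. apply is_derive_Reals, H.
Qed.

Lemma is_derive_Rpower y c : 0 < y -> is_derive (fun u => Rpower u c) y (c * Rpower y (c - 1)).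
Proof. intros. apply is_derive_Reals, derivable_pt_lim_power. auto. Qed.

Lemma continuity_pt_powW p y : 2 < p -> continuity_pt (powW p) y.
Proof.
  intros Hp. destruct (Req_dec y 0) as [->|Hy].
  - intros eps Heps. destruct (powW_small p Hp eps Heps) as [d [Hd Hsmall]].
    exists d. split; auto. intros h [_ Hh]. simpl in *. unfold R_dist in *.
    rewrite Rminus_0_r in Hh.
    rewrite powW_0, Rminus_0_r, Rabs_pos_eq by apply powW_nonneg. apply Hsmall, Hh.
  - apply Rabs_pos_lt in Hy.
    apply (continuity_pt_comp Rabs (fun u => rpow u (p - 2))); [apply Rcontinuity_abs|].
    apply continuity_pt_filterlim.
    apply (continuous_ext_loc (fun u => rpow u (p - 2)) (fun u => Rpower u (p - 2)) (Rabs y)).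
    + apply (locally_interval _ _ 0 p_infty); [exact Hy | exact I|].
      intros u Hu _. unfold rpow. simpl in Hu. destruct (Rlt_dec 0 u); lra.
    + apply continuity_pt_filterlim, (is_derive_continuity_pt _ _ _ (is_derive_Rpower _ _ Hy)).
Qed.

Lemma powV_pos p y : 0 < y -> powV p y = Rpower y (p - 1).
Proof.
  intros Hy. unfold powV. rewrite powW_abs, Rabs_pos_eq by (rewrite ?Rabs_pos_eq; lra).
  replace (p - 1) with ((p - 2) + 1) by ring. rewrite Rpower_plus, Rpower_1; auto.
Qed.

Lemma powV_neg p y : y < 0 -> powV p y = - Rpower (- y) (p - 1).
Proof.
  intros Hy. unfold powV. rewrite powW_abs, Rabs_left by (rewrite ?Rabs_left; lra).
  replace (p - 1) with ((p - 2) + 1) by ring. rewrite Rpower_plus, Rpower_1 by lra. ring.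
Qed.

Lemma is_derive_eq (f : R -> R) y l l' : is_derive f y l -> l = l' -> is_derive f y l'.
Proof. intros H <-. exact H. Qed.

Ltac rewrite_Derive H :=
  match type of H with is_derive _ ?x ?l =>
    match goal with |- context [Derive ?g x] =>
      replace (Derive g x) with l by (symmetry; apply is_derive_unique; exact H)
    end
  end.

Lemma is_derive_powV p y : 2 < p -> is_derive (powV p) y ((p - 1) * powW p y).
Proof.
  intros Hp. destruct (Rtotal_order y 0) as [Hy|[->|Hy]].
  - apply is_derive_ext_loc with (fun z => - Rpower (- z) (p - 1)).
    + apply (locally_interval _ _ m_infty 0); [exact I | exact Hy|].
      intros z _ Hz. rewrite powV_neg; auto.
    + eapply is_derive_eq.
      * apply (is_derive_opp (fun z => Rpower (- z) (p - 1))).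
        apply (is_derive_comp (fun u => Rpower u (p - 1)) Ropp);
          [apply is_derive_Rpower; lra | auto_derive; auto].
      * rewrite powW_abs, Rabs_left by (rewrite ?Rabs_left; lra).
        replace (p - 1 - 1) with (p - 2) by ring.
        simpl. unfold opp, scal; simpl. unfold mult; simpl. ring.
  - (* At 0 the difference quotient is powW p h, which tends to 0. *)
    apply is_derive_Reals. rewrite powW_0, Rmult_0_r. intros eps Heps.
    destruct (powW_small p Hp eps Heps) as [d [Hd Hsmall]]. exists (mkposreal d Hd).
    intros h Hh0 Hh. simpl in Hh. unfold powV. rewrite Rplus_0_l, powW_0, Rmult_0_l.
    replace ((powW p h * h - 0) / h - 0) with (powW p h) by (field; auto).
    rewrite Rabs_pos_eq by apply powW_nonneg. auto.
  - apply is_derive_ext_loc with (fun z => Rpower z (p - 1)).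
    + apply (locally_interval _ _ 0 p_infty); [exact Hy | exact I|].
      intros z Hz _. rewrite powV_pos; auto.
    + eapply is_derive_eq; [apply is_derive_Rpower; auto|].
      rewrite powW_abs, Rabs_pos_eq by (rewrite ?Rabs_pos_eq; lra).
      replace (p - 1 - 1) with (p - 2) by ring. reflexivity.
Qed.

Lemma is_derive_powP p y : 2 < p -> is_derive (powP p) y (p * powV p y).
Proof.
  intros Hp. eapply is_derive_eq.
  - apply (is_derive_mult (powV p) (fun z => z));
      [apply is_derive_powV; auto | apply is_derive_id|].
    intros; apply Rmult_comm.
  - unfold powV. simpl. unfold plus, mult, one; simpl. ring.
Qed.

Lemma continuity_pt_powV p y : 2 < p -> continuity_pt (powV p) y.
Proof. intros. eapply is_derive_continuity_pt, is_derive_powV; auto. Qed.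

Lemma continuity_pt_powP p y : 2 < p -> continuity_pt (powP p) y.
Proof. intros. eapply is_derive_continuity_pt, is_derive_powP; auto. Qed.

Lemma rpow_abs_eq_powP p y : 2 < p -> rpow (Rabs y) p = powP p y.
Proof.
  intros Hp. unfold powP, powV, powW, rpow. destruct (Rlt_dec 0 (Rabs y)) as [Hy|Hy].
  - replace p with ((p - 2) + 2) at 1 by ring. rewrite Rpower_plus, Rmult_assoc. f_equal.
    replace 2 with (INR 2) by (simpl; ring). rewrite Rpower_pow by auto. simpl.
    rewrite Rmult_1_r, <- Rabs_mult. apply Rabs_pos_eq. nra.
  - replace y with 0 by (pose proof (Rabs_pos y); destruct (Req_dec y 0) as [|Hne];
      [auto | apply Rabs_pos_lt in Hne; lra]). ring.
Qed.

(** * Continuity, integrals and extrema of real functions *)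

Ltac case_abs :=
  repeat match goal with |- context [Rabs ?t] =>
    destruct (Rcase_abs t); [rewrite (Rabs_left t) by lra | rewrite (Rabs_pos_eq t) by lra]
  end.

Definition clamp (a b z : R) : R := Rmax a (Rmin b z).

Lemma clamp_in a b z : a <= b -> a <= clamp a b z <= b.
Proof. intros. unfold clamp, Rmax, Rmin. repeat destruct Rle_dec; lra. Qed.

Lemma clamp_id a b z : a <= z <= b -> clamp a b z = z.
Proof. intros. unfold clamp, Rmax, Rmin. repeat destruct Rle_dec; lra. Qed.

Lemma Rmax_dist a u v : Rabs (Rmax a u - Rmax a v) <= Rabs (u - v).
Proof. unfold Rmax. repeat destruct Rle_dec; case_abs; lra. Qed.

Lemma clamp_dist a b u v : a <= b -> Rabs (clamp a b u - clamp a b v) <= Rabs (u - v).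
Proof. intros. unfold clamp, Rmax, Rmin. repeat destruct Rle_dec; case_abs; lra. Qed.

Lemma continuity_pt_clamp a b z : a <= b -> continuity_pt (clamp a b) z.
Proof.
  intros Hab eps Heps. exists eps. split; auto. intros w [_ Hw]. simpl in *. unfold R_dist in *.
  eapply Rle_lt_trans; [apply clamp_dist|]; auto.
Qed.

Definition cont_within (a b : R) (f : R -> R) (z : R) : Prop :=
  forall eps, 0 < eps -> exists d, 0 < d /\
    forall w, a <= w <= b -> Rabs (w - z) < d -> Rabs (f w - f z) < eps.

Lemma cont_within_comp (F f : R -> R) a b z :
  continuity_pt F (f z) -> cont_within a b f z -> cont_within a b (fun w => F (f w)) z.
Proof.
  intros HF Hf eps Heps. destruct (HF eps Heps) as [d [Hd HF']].
  destruct (Hf d Hd) as [d' [Hd' Hf']]. exists d'. split; auto.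
  intros w Hw Hwz. destruct (Req_dec (f w) (f z)) as [E|E].
  - rewrite E, Rminus_diag, Rabs_R0; auto.
  - apply (HF' (f w)). split; [split; [exact I | auto] | apply Hf'; auto].
Qed.

Lemma continuity_pt_clamp_comp f a b : a <= b -> (forall z, a <= z <= b -> cont_within a b f z) ->
  forall y, continuity_pt (fun w => f (clamp a b w)) y.
Proof.
  intros Hab H y eps Heps.
  destruct (H (clamp a b y) (clamp_in a b y Hab) eps Heps) as [d [Hd Hf]].
  exists d. split; auto. intros w [_ Hw]. simpl in *. unfold R_dist in *.
  apply Hf; [apply clamp_in; auto|]. pose proof (clamp_dist a b w y Hab). lra.
Qed.

Lemma ex_RInt_continuity_pt f a b : a <= b -> (forall z, a <= z <= b -> continuity_pt f z) ->
  ex_RInt f a b.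
Proof.
  intros Hab H. apply (@ex_RInt_continuous R_CompleteNormedModule). intros z Hz.
  rewrite Rmin_left, Rmax_right in Hz by auto. apply continuity_pt_filterlim. auto.
Qed.

Lemma is_RInt_continuity_pt f a b : a <= b -> (forall z, a <= z <= b -> continuity_pt f z) ->
  is_RInt f a b (RInt f a b).
Proof. intros. apply (@RInt_correct R_CompleteNormedModule), ex_RInt_continuity_pt; auto. Qed.

Lemma ex_RInt_cont_within f a b : a <= b -> (forall z, a <= z <= b -> cont_within a b f z) ->
  ex_RInt f a b.
Proof.
  intros Hab H. apply (@ex_RInt_ext R_NormedModule (fun w => f (clamp a b w))).
  - intros w Hw. rewrite Rmin_left, Rmax_right in Hw by auto. rewrite clamp_id; auto; lra.
  - apply ex_RInt_continuity_pt; auto. intros; apply continuity_pt_clamp_comp; auto.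
Qed.

Lemma cont_within_attains_max f a b : a <= b -> (forall z, a <= z <= b -> cont_within a b f z) ->
  exists zm, a <= zm <= b /\ forall w, a <= w <= b -> f w <= f zm.
Proof.
  intros Hab H.
  destruct (continuity_ab_maj (fun w => f (clamp a b w)) a b Hab) as [M [HM HMab]].
  { intros; apply continuity_pt_clamp_comp; auto. }
  exists M. split; auto. intros w Hw. specialize (HM w Hw). rewrite !clamp_id in HM; auto.
Qed.

Lemma deriv01_is_derive f z l : 0 < z < 1 -> deriv01 f z l -> is_derive f z l.
Proof.
  intros Hz H. apply is_derive_Reals. intros eps Heps.
  destruct (H eps Heps) as [d [Hd Hf]].
  assert (Hpos : 0 < Rmin d (Rmin z (1 - z))) by (repeat apply Rmin_pos; lra).
  exists (mkposreal _ Hpos). intros h Hh0 Hh. simpl in Hh.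
  pose proof (Rmin_l d (Rmin z (1 - z))). pose proof (Rmin_r d (Rmin z (1 - z))).
  pose proof (Rmin_l z (1 - z)). pose proof (Rmin_r z (1 - z)).
  specialize (Hf (z + h)). simpl in Hf. unfold R_dist in Hf.
  replace (z + h - z) with h in Hf by ring. apply Hf. revert Hh. case_abs; lra.
Qed.

Lemma deriv01_cont_within f z l : 0 <= z <= 1 -> deriv01 f z l -> cont_within 0 1 f z.
Proof.
  intros Hz H eps Heps. destruct (H 1 Rlt_0_1) as [d [Hd Hf]].
  set (L := Rabs l + 1). assert (HL : 0 < L) by (pose proof (Rabs_pos l); unfold L; lra).
  exists (Rmin d (eps / L)). split; [apply Rmin_pos; auto; apply Rdiv_lt_0_compat; auto|].
  intros w Hw Hwz. pose proof (Rmin_l d (eps / L)). pose proof (Rmin_r d (eps / L)).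
  destruct (Req_dec w z) as [->|Hne]; [rewrite Rminus_diag, Rabs_R0; auto|].
  specialize (Hf w). simpl in Hf. unfold R_dist in Hf.
  assert (Hq : Rabs ((f w - f z) / (w - z) - l) < 1) by (apply Hf; split; [split; auto | lra]).
  assert (Hq' : Rabs ((f w - f z) / (w - z)) <= L).
  { pose proof (Rabs_triang_inv ((f w - f z) / (w - z)) l). unfold L. lra. }
  replace (f w - f z) with ((f w - f z) / (w - z) * (w - z)) by (field; lra).
  rewrite Rabs_mult.
  assert (Hwz' : L * Rabs (w - z) < eps).
  { apply Rlt_le_trans with (L * (eps / L)); [apply Rmult_lt_compat_l; lra | right; field; lra]. }
  pose proof (Rabs_pos (w - z)). pose proof (Rabs_pos ((f w - f z) / (w - z))). nra.
Qed.

Lemma continuity_pt_Rplus f g z :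
  continuity_pt f z -> continuity_pt g z -> continuity_pt (fun w => f w + g w) z.
Proof. apply continuity_pt_plus. Qed.

Lemma continuity_pt_Rminus f g z :
  continuity_pt f z -> continuity_pt g z -> continuity_pt (fun w => f w - g w) z.
Proof. apply continuity_pt_minus. Qed.

Lemma continuity_pt_Rmult f g z :
  continuity_pt f z -> continuity_pt g z -> continuity_pt (fun w => f w * g w) z.
Proof. apply continuity_pt_mult. Qed.

Lemma continuity_pt_Ropp f z : continuity_pt f z -> continuity_pt (fun w => - f w) z.
Proof. apply continuity_pt_opp. Qed.

Lemma continuity_pt_cst c z : continuity_pt (fun _ => c) z.
Proof. apply continuity_pt_const. intros ? ?. reflexivity. Qed.

Ltac continuity_pt_arith leaf :=
  repeat first [ leaf | apply continuity_pt_Rminus | apply continuity_pt_Rplus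
               | apply continuity_pt_Rmult | apply continuity_pt_Ropp | apply continuity_pt_cst
               | apply continuity_pt_id ].

Lemma RInt_le_const (f : R -> R) c u v : u <= v -> ex_RInt f u v ->
  (forall z, u < z < v -> f z <= c) -> RInt f u v <= (v - u) * c.
Proof.
  intros Huv Hf H. replace ((v - u) * c) with (RInt (fun _ => c) u v)
    by (rewrite RInt_const; reflexivity).
  apply RInt_le; auto. apply ex_RInt_const.
Qed.

Lemma RInt_Chasles_R (f : R -> R) u v w : ex_RInt f u v -> ex_RInt f v w ->
  RInt f u w = RInt f u v + RInt f v w.
Proof. intros. symmetry. apply (RInt_Chasles f u v w); auto. Qed.

Lemma le_of_le_plus_small_mul A C K e0 : 0 < e0 -> 0 <= K ->
  (forall e, 0 < e <= e0 -> A <= C + e * K) -> A <= C.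
Proof.
  intros He0 HK H. apply Rle_plus_epsilon. intros eps Heps.
  set (e := Rmin e0 (eps / (K + 1))).
  assert (He : 0 < e) by (apply Rmin_pos; auto; apply Rdiv_lt_0_compat; lra).
  assert (HeK : e * (K + 1) <= eps).
  { apply Rle_trans with (eps / (K + 1) * (K + 1));
      [apply Rmult_le_compat_r; [lra | apply Rmin_r]|].
    right. field. lra. }
  specialize (H e (conj He (Rmin_l _ _))). nra.
Qed.

Lemma exp_mul_le_1_plus L d : 0 < L -> 0 < d ->
  exists s0, 0 < s0 /\ forall s, s <= s0 -> exp (L * s) <= 1 + d.
Proof.
  intros HL Hd. assert (Hln : 0 < ln (1 + d)) by (rewrite <- ln_1; apply ln_increasing; lra).
  exists (ln (1 + d) / L). split; [apply Rdiv_lt_0_compat; auto|]. intros s Hs.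
  assert (Hle : L * s <= ln (1 + d)).
  { apply Rle_trans with (L * (ln (1 + d) / L));
      [apply Rmult_le_compat_l; lra | right; field; lra]. }
  rewrite <- (exp_ln (1 + d)) by lra.
  destruct (Rle_lt_or_eq_dec _ _ Hle) as [Hlt|Heq];
    [left; apply exp_increasing, Hlt | rewrite Heq; lra].
Qed.

Lemma is_derive_max_interior f a b z l :
  a < z < b -> (forall w, a < w < b -> f w <= f z) -> is_derive f z l -> l = 0.
Proof.
  intros Hz Hm Hd. apply is_derive_Reals in Hd.
  rewrite <- (derive_pt_eq_0 f z l (exist _ l Hd) Hd).
  apply (deriv_maximum f a b); try lra. intros w Hw1 Hw2. apply Hm. lra.
Qed.

Lemma is_derive_max_right f a z l :
  a < z -> (forall w, a <= w <= z -> f w <= f z) -> is_derive f z l -> 0 <= l.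
Proof.
  intros Haz Hm Hd. apply is_derive_Reals in Hd. destruct (Rle_lt_dec 0 l) as [|Hl]; auto.
  destruct (Hd (- l / 2)) as [d Hdd]; [lra|]. pose proof (cond_pos d).
  set (h := - Rmin (d / 2) ((z - a) / 2)).
  assert (0 < Rmin (d / 2) ((z - a) / 2)) by (apply Rmin_pos; lra).
  pose proof (Rmin_l (d / 2) ((z - a) / 2)). pose proof (Rmin_r (d / 2) ((z - a) / 2)).
  assert (Hh : Rabs h < d) by (unfold h; rewrite Rabs_Ropp, Rabs_pos_eq; lra).
  specialize (Hdd h ltac:(unfold h; lra) Hh). specialize (Hm (z + h) ltac:(unfold h; lra)).
  apply Rabs_def2 in Hdd.
  assert (0 <= (f (z + h) - f z) / h).
  { replace ((f (z + h) - f z) / h) with ((f z - f (z + h)) / (- h)) by (field; unfold h; lra).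
    apply Rmult_le_pos; [lra | left; apply Rinv_0_lt_compat; unfold h; lra]. }
  lra.
Qed.

(* If f' > 0 just right of an interior maximum z, then f increases there: contradiction. *)
Lemma second_derivative_max_interior f f' a b z l :
  (forall w, a < w < b -> is_derive f w (f' w)) -> a < z < b ->
  is_derive f' z l -> (forall w, a < w < b -> f w <= f z) -> l <= 0.
Proof.
  intros Hd Hz Hd' Hm.
  assert (H0 : f' z = 0) by (apply (is_derive_max_interior f a b z); auto).
  destruct (Rle_lt_dec l 0) as [|Hl]; auto. exfalso.
  apply is_derive_Reals in Hd'. destruct (Hd' (l / 2)) as [d Hdd]; [lra|]. pose proof (cond_pos d).
  set (h := Rmin (d / 2) ((b - z) / 2)).
  assert (0 < h) by (apply Rmin_pos; lra).
  pose proof (Rmin_l (d / 2) ((b - z) / 2)). pose proof (Rmin_r (d / 2) ((b - z) / 2)).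
  assert (Hpos : forall c, z < c <= z + h -> 0 < f' c).
  { intros c Hc. specialize (Hdd (c - z) ltac:(lra)).
    assert (Hcz : Rabs (c - z) < d) by (rewrite Rabs_pos_eq; unfold h in *; lra).
    specialize (Hdd Hcz). replace (z + (c - z)) with c in Hdd by ring. rewrite H0 in Hdd.
    apply Rabs_def2 in Hdd.
    assert (Hq : 0 < (f' c - 0) / (c - z)) by lra.
    apply Rmult_lt_reg_r with (/ (c - z)); [apply Rinv_0_lt_compat; lra | lra]. }
  destruct (MVT_cor2 f f' z (z + h)) as [c [Hc1 Hc2]]; [lra| |].
  { intros c Hc. apply is_derive_Reals, Hd. unfold h in *; lra. }
  specialize (Hm (z + h) ltac:(unfold h in *; lra)). specialize (Hpos c ltac:(lra)). nra.
Qed.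

Lemma continuity_2d_pt_slice (g : R -> R -> R) u v :
  continuity_2d_pt g u v -> continuity_pt (g u) v.
Proof.
  intros H eps Heps. destruct (H (mkposreal eps Heps)) as [d Hd].
  exists d. split; [apply cond_pos|]. intros w [_ Hw]. simpl in *. unfold R_dist in *.
  apply Hd; auto. rewrite Rminus_diag, Rabs_R0; apply cond_pos.
Qed.

Lemma locally_2d_interior t z : 0 < t -> 0 < z < 1 ->
  locally_2d (fun u v => 0 < u /\ 0 < v < 1) t z.
Proof.
  intros Ht Hz. set (r := Rmin t (Rmin z (1 - z))).
  assert (Hr : 0 < r) by (repeat apply Rmin_pos; lra).
  pose proof (Rmin_l t (Rmin z (1 - z))). pose proof (Rmin_r t (Rmin z (1 - z))).
  pose proof (Rmin_l z (1 - z)). pose proof (Rmin_r z (1 - z)).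
  exists (mkposreal r Hr). simpl. intros u v Hu Hv.
  apply Rabs_def2 in Hu. apply Rabs_def2 in Hv. unfold r in *. lra.
Qed.

Lemma cont2_on_interior (D : R -> R -> Prop) f t z :
  cont2_on D f -> (forall u v, 0 < u -> 0 < v < 1 -> D u v) ->
  0 < t -> 0 < z < 1 -> continuity_2d_pt f t z.
Proof.
  intros H HD Ht Hz eps. destruct (locally_2d_interior t z Ht Hz) as [r Hr].
  destruct (H t z (HD t z Ht Hz) eps (cond_pos eps)) as [d [Hd Hf]].
  exists (mkposreal (Rmin d r) (Rmin_pos _ _ Hd (cond_pos r))). simpl. intros u v Hu Hv.
  pose proof (Rmin_l d r). pose proof (Rmin_r d r).
  destruct (Hr u v ltac:(lra) ltac:(lra)). apply Hf; [apply HD | ..]; auto; lra.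
Qed.

Lemma continuity_2d_pt_clamp (f : R -> R -> R) t0 u v : 0 <= t0 ->
  cont2_on (fun t z => 0 <= t /\ 0 <= z <= 1) f ->
  continuity_2d_pt (fun u v => f (Rmax t0 u) (clamp 0 1 v)) u v.
Proof.
  intros Ht0 H eps.
  assert (Hd : 0 <= Rmax t0 u /\ 0 <= clamp 0 1 v <= 1).
  { split; [pose proof (Rmax_l t0 u); lra | apply clamp_in; lra]. }
  destruct (H _ _ Hd eps (cond_pos eps)) as [d [Hd0 Hf]].
  exists (mkposreal d Hd0). simpl. intros u' v' Hu Hv. apply Hf.
  - split; [pose proof (Rmax_l t0 u'); lra | apply clamp_in; lra].
  - eapply Rle_lt_trans; [apply Rmax_dist | auto].
  - eapply Rle_lt_trans; [apply clamp_dist; lra | auto].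
Qed.

(* Continuity comes from uniform continuity of g on compact slices. *)
Lemma slice_max_continuous (g : R -> R -> R) :
  (forall u v, continuity_2d_pt g u v) ->
  exists zm : R -> R, (forall u, 0 <= zm u <= 1 /\ forall w, 0 <= w <= 1 -> g u w <= g u (zm u))
    /\ forall u, continuity_pt (fun u => g u (zm u)) u.
Proof.
  intros Hg.
  assert (EX : forall u, exists z, 0 <= z <= 1 /\ forall w, 0 <= w <= 1 -> g u w <= g u z).
  { intros u.
    assert (Hc : forall c, 0 <= c <= 1 -> continuity_pt (g u) c)
      by (intros; apply continuity_2d_pt_slice, Hg).
    destruct (continuity_ab_maj (g u) 0 1 ltac:(lra) Hc) as [M [HM HM01]].
    exists M. auto. }
  exists (fun u => proj1_sig (constructive_indefinite_description _ (EX u))).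
  set (zm := fun u => proj1_sig (constructive_indefinite_description _ (EX u))).
  assert (Hzm : forall u, 0 <= zm u <= 1 /\ forall w, 0 <= w <= 1 -> g u w <= g u (zm u)).
  { intros u. unfold zm. destruct (constructive_indefinite_description _ (EX u)); auto. }
  split; [exact Hzm|]. fold zm. intros u eps Heps.
  destruct (uniform_continuity_2d_1d' g 0 1 u (fun z _ => Hg u z) (mkposreal eps Heps)) as [d Hd].
  exists d. split; [apply cond_pos|]. intros s [_ Hs]. simpl in *. unfold R_dist in *.
  apply Rabs_def2 in Hs as Hs'. pose proof (cond_pos d).
  destruct (Hzm u) as [Hu1 Hu2]. destruct (Hzm s) as [Hs1 Hs2].
  assert (A1 := Hd (zm u) u (zm u) s Hu1 ltac:(lra) Hu1 ltac:(lra)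
                  ltac:(rewrite Rminus_diag, Rabs_R0; apply cond_pos)).
  assert (A2 := Hd (zm s) s (zm s) u Hs1 ltac:(lra) Hs1 ltac:(lra)
                  ltac:(rewrite Rminus_diag, Rabs_R0; apply cond_pos)).
  simpl in A1, A2. apply Rabs_def2 in A1. apply Rabs_def2 in A2.
  specialize (Hu2 (zm s) Hs1). specialize (Hs2 (zm u) Hu1).
  change (Rabs (g s (zm s) - g u (zm u)) < eps). apply Rabs_def1; lra.
Qed.

(** * A parabolic barrier from the maximum principle *)

(* With M = max |y'|, |y z| <= M min(z, 1 - z) <= 2 M z (1 - z). *)
Lemma C2_01_parabola_bound (y : R -> R) : C2_01 y -> y 0 = 0 -> y 1 = 0 ->
  exists B, 0 < B /\ forall z, 0 <= z <= 1 -> Rabs (y z) <= B * z * (1 - z).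
Proof.
  intros [y1 [y2 Hy]] H0 H1.
  assert (Hc1 : forall z, 0 <= z <= 1 -> cont_within 0 1 y1 z)
    by (intros z Hz; apply (deriv01_cont_within _ z (y2 z)), Hy; auto).
  assert (Hc : forall z, 0 <= z <= 1 -> cont_within 0 1 y z)
    by (intros z Hz; apply (deriv01_cont_within _ z (y1 z)), Hy; auto).
  destruct (cont_within_attains_max (fun w => Rabs (y1 w)) 0 1) as [zM [HzM HM]]; [lra| |].
  { intros z Hz. apply (cont_within_comp Rabs); auto. apply Rcontinuity_abs. }
  pose proof (Rabs_pos (y1 zM)). set (M := Rabs (y1 zM)) in *.
  set (h := fun w => y (clamp 0 1 w)).
  assert (Hhc : forall w, continuity_pt h w) by (apply continuity_pt_clamp_comp; auto; lra).
  assert (Hhd : forall w, 0 < w < 1 -> is_derive h w (y1 w)).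
  { intros w Hw. apply is_derive_ext_loc with y.
    - apply (locally_interval _ _ 0 1); simpl; try lra.
      intros s Hs0 Hs1. unfold h. rewrite clamp_id; lra.
    - apply deriv01_is_derive; auto. apply Hy; lra. }
  assert (Hmvt : forall u v, 0 <= u <= v -> v <= 1 -> Rabs (y v - y u) <= M * (v - u)).
  { intros u v Huv Hv. destruct (MVT_gen h u v y1) as [c [Hcuv Heq]].
    - intros w Hw. rewrite Rmin_left, Rmax_right in Hw by lra. apply Hhd; lra.
    - intros; apply Hhc.
    - rewrite Rmin_left, Rmax_right in Hcuv by lra.
      unfold h in Heq. rewrite !clamp_id in Heq by lra.
      rewrite Heq, Rabs_mult, (Rabs_pos_eq (v - u)) by lra.
      apply Rmult_le_compat_r; [lra | apply HM; lra]. }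
  exists (2 * M + 1). split; [lra|]. intros z Hz.
  assert (HA := Hmvt 0 z ltac:(lra) ltac:(lra)). assert (HB := Hmvt z 1 ltac:(lra) ltac:(lra)).
  rewrite H0, Rminus_0_r, Rminus_0_r in HA. rewrite H1, Rminus_0_l, Rabs_Ropp in HB.
  destruct (Rle_lt_dec z (1 / 2)); nra.
Qed.

Section MaximumPrinciple.

Variables (a : R) (y yt yz yzz : R -> R -> R).
Hypothesis Ha : 0 < a.
Hypothesis Hcont : cont2_on (fun t z => 0 <= t /\ 0 <= z <= 1) y.
Hypothesis Hyt : forall t z, 0 < t -> 0 < z < 1 -> is_derive (fun s => y s z) t (yt t z).
Hypothesis Hyz : forall t z, 0 < t -> 0 < z < 1 -> is_derive (fun w => y t w) z (yz t z).
Hypothesis Hyzz : forall t z, 0 < t -> 0 < z < 1 -> is_derive (fun w => yz t w) z (yzz t z).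
Hypothesis Hheat : forall t z, 0 < t -> 0 < z < 1 -> yt t z = a * yzz t z.
Hypothesis Hbc0 : forall t, 0 <= t -> y t 0 = 0.
Hypothesis Hbc1 : forall t, 0 <= t -> y t 1 = 0.

(* y - B z (1 - z) is a strict subsolution: its heat operator equals -2 a B < 0,
   so it cannot attain its maximum at an interior point at a positive time. *)
Lemma subsolution_no_interior_max B t1 ts zs : 0 < B -> 0 < t1 -> t1 < ts -> 0 < zs < 1 ->
  ~ (forall s w, t1 <= s <= ts -> 0 <= w <= 1 ->
       y s w - B * w * (1 - w) <= y ts zs - B * zs * (1 - zs)).
Proof.
  intros HB Ht1 Hts Hzs Hmax.
  assert (Ht : 0 <= yt ts zs).
  { apply (is_derive_max_right (fun s => y s zs - B * zs * (1 - zs)) t1 ts); auto.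
    - intros s Hs. apply Hmax; lra.
    - auto_derive; [eexists; apply Hyt; lra|].
      rewrite_Derive (Hyt ts zs ltac:(lra) Hzs). ring. }
  assert (Hz : yzz ts zs + 2 * B <= 0).
  { apply (second_derivative_max_interior (fun w => y ts w - B * w * (1 - w))
             (fun w => yz ts w - B * (1 - 2 * w)) 0 1 zs); auto.
    - intros w Hw. auto_derive; [eexists; apply Hyz; lra|].
      rewrite_Derive (Hyz ts w ltac:(lra) Hw). ring.
    - auto_derive; [eexists; apply Hyzz; lra|].
      rewrite_Derive (Hyzz ts zs ltac:(lra) Hzs). ring.
    - intros w Hw. apply Hmax; lra. }
  rewrite Hheat in Ht by lra. nra.
Qed.

Lemma parabola_barrier_persists B t1 T : 0 < B -> 0 < t1 -> t1 <= T ->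
  (forall z, 0 <= z <= 1 -> y t1 z <= B * z * (1 - z)) ->
  forall t z, t1 <= t <= T -> 0 <= z <= 1 -> y t z <= B * z * (1 - z).
Proof.
  intros HB Ht1 HT Hinit.
  set (v := fun u w => y (Rmax t1 u) (clamp 0 1 w) - B * clamp 0 1 w * (1 - clamp 0 1 w)).
  assert (Hv : forall t z, t1 <= t -> 0 <= z <= 1 -> v t z = y t z - B * z * (1 - z)).
  { intros t z Ht Hz. unfold v. rewrite clamp_id, Rmax_right; lra. }
  assert (Hvc : forall u w, continuity_2d_pt v u w).
  { intros u w. assert (Hcl := continuity_pt_clamp 0 1 w ltac:(lra)).
    apply continuity_2d_pt_minus; [apply continuity_2d_pt_clamp; auto; lra|].
    repeat apply continuity_2d_pt_mult;
      try apply continuity_2d_pt_minus; try apply continuity_2d_pt_const;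
      apply (continuity_1d_2d_pt_comp (clamp 0 1) (fun _ w => w)); auto;
      apply continuity_2d_pt_id2. }
  destruct (slice_max_continuous v Hvc) as [zm [Hzm Hmc]].
  set (m := fun u => v u (zm u)) in Hmc.
  destruct (continuity_ab_maj m t1 T HT (fun c _ => Hmc c)) as [ts [Hts HtsT]].
  assert (Hm : m ts <= 0).
  { destruct (Rle_lt_dec (m ts) 0) as [|Hpos]; auto. exfalso.
    destruct (Hzm ts) as [Hz01 Hzmax]. set (zs := zm ts) in *.
    assert (Hmts : m ts = y ts zs - B * zs * (1 - zs)) by (apply Hv; lra).
    assert (zs <> 0) by (intros E; rewrite E, Hbc0 in Hmts; lra).
    assert (zs <> 1) by (intros E; rewrite E, Hbc1 in Hmts; lra).
    assert (ts <> t1) by (intros E; rewrite <- E in Hinit; specialize (Hinit zs Hz01); lra).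
    apply (subsolution_no_interior_max B t1 ts zs); auto; try lra.
    intros s w Hs Hw. rewrite <- (Hv s w), <- (Hv ts zs) by lra.
    apply Rle_trans with (m s); [apply Hzm; auto | apply Hts; lra]. }
  intros t z Ht Hz.
  assert (v t z <= m t) by (apply Hzm; auto). specialize (Hts t Ht).
  rewrite Hv in * by lra. lra.
Qed.

End MaximumPrinciple.

(** * The cotangent weight *)

(* k = pi cot(pi z) solves the Riccati equation k' = -pi^2 - k^2 on (0, 1); integrating
   (u' - k u)^2 >= 0 against it gives Wirtinger's inequality with constant pi^2. *)
Definition picot (z : R) : R := PI * cos (PI * z) / sin (PI * z).

Lemma sin_PI_pos z : 0 < z < 1 -> 0 < sin (PI * z).
Proof. intros. pose proof PI_RGT_0. apply sin_gt_0; nra. Qed.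

Lemma is_derive_picot z : 0 < z < 1 -> is_derive picot z (- PI ^ 2 - picot z ^ 2).
Proof.
  intros Hz. pose proof (sin_PI_pos z Hz). unfold picot. auto_derive; [lra|].
  assert (E := sin2_cos2 (PI * z)). unfold Rsqr in E.
  match goal with |- ?l = ?r => change (@eq R l r) end. change RinvImpl.Rinv with Rinv.
  transitivity (- PI ^ 2 * (sin (PI * z) * sin (PI * z) + cos (PI * z) * cos (PI * z))
                / (sin (PI * z) * sin (PI * z))); field; lra.
Qed.

Lemma continuity_pt_picot z : 0 < z < 1 -> continuity_pt picot z.
Proof. intros. eapply is_derive_continuity_pt, is_derive_picot; auto. Qed.

Lemma picot_le z : 0 < z <= 1 / 4 -> picot z <= 2 / z.
Proof.
  intros Hz. pose proof PI_RGT_0. pose proof PI_4.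
  set (u := PI * z). assert (Hu : 0 < u <= 1) by (unfold u; nra).
  assert (Hs := proj1 (sin_bound u 0 ltac:(lra) ltac:(unfold u; nra))).
  unfold sin_approx, sin_term in Hs. simpl in Hs.
  assert (Hsin : u / 2 <= sin u) by nra.
  pose proof (COS_bound u) as [_ Hcos].
  unfold picot. fold u. unfold Rdiv.
  apply Rle_trans with (PI * / sin u).
  - apply Rmult_le_compat_r; [left; apply Rinv_0_lt_compat; lra | nra].
  - apply Rle_trans with (PI * / (u / 2)).
    + apply Rmult_le_compat_l; [lra | apply Rinv_le_contravar; lra].
    + right. unfold u. field. lra.
Qed.

Lemma picot_sym z : picot z = - picot (1 - z).
Proof.
  unfold picot. replace (PI * (1 - z)) with (PI - PI * z) by ring.
  rewrite sin_PI_x, Rtrigo_facts.cos_pi_minus. unfold Rdiv. ring.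
Qed.

Lemma picot_powP_le p B eta z y : 2 < p -> 0 < B -> B * eta <= 1 -> 0 < z <= eta -> eta <= 1 / 4 ->
  Rabs y <= B * z -> picot z * powP p y <= 2 * B ^ 2 * eta.
Proof.
  intros Hp HB HBe Hz Heta Hy.
  assert (Hk := picot_le z ltac:(lra)). pose proof (powP_nonneg p y).
  assert (Hg : powP p y <= (B * z) * (B * z)) by (apply powP_le_sqr; auto; nra).
  apply Rle_trans with (2 / z * powP p y); [apply Rmult_le_compat_r; auto|].
  apply Rle_trans with (2 / z * ((B * z) * (B * z))).
  - apply Rmult_le_compat_l; auto. apply Rlt_le, Rdiv_lt_0_compat; lra.
  - replace (2 / z * (B * z * (B * z))) with (2 * B ^ 2 * z) by (field; lra). nra.
Qed.

(** * Energy decay for the heat equation *)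

Section HeatEnergy.

Variables (a p : R) (x xt xz xzz : R -> R -> R).
Hypothesis Ha : 0 < a.
Hypothesis Hp : 2 < p.
Hypothesis Hcont : cont2_on (fun t z => 0 <= t /\ 0 <= z <= 1) x.
Hypothesis Hxt : forall t z, 0 < t -> 0 < z < 1 -> derivable_pt_lim (fun s => x s z) t (xt t z).
Hypothesis Hxz : forall t z, 0 < t -> 0 < z < 1 -> derivable_pt_lim (fun w => x t w) z (xz t z).
Hypothesis Hxzz : forall t z, 0 < t -> 0 < z < 1 -> derivable_pt_lim (fun w => xz t w) z (xzz t z).
Hypothesis Hcxt : cont2_on (fun t z => 0 < t /\ 0 < z < 1) xt.
Hypothesis Hcxzz : cont2_on (fun t z => 0 < t /\ 0 < z < 1) xzz.
Hypothesis HC2 : forall t, 0 <= t -> C2_01 (x t).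
Hypothesis Hheat : forall t z, 0 < t -> 0 < z < 1 -> xt t z = a * xzz t z.
Hypothesis Hbc0 : forall t, 0 <= t -> x t 0 = 0.
Hypothesis Hbc1 : forall t, 0 <= t -> x t 1 = 0.

Lemma is_derive_x_t t z : 0 < t -> 0 < z < 1 -> is_derive (fun s => x s z) t (xt t z).
Proof. intros. apply is_derive_Reals, Hxt; auto. Qed.

Lemma is_derive_x_z t z : 0 < t -> 0 < z < 1 -> is_derive (fun w => x t w) z (xz t z).
Proof. intros. apply is_derive_Reals, Hxz; auto. Qed.

Lemma is_derive_xz_z t z : 0 < t -> 0 < z < 1 -> is_derive (fun w => xz t w) z (xzz t z).
Proof. intros. apply is_derive_Reals, Hxzz; auto. Qed.

Lemma continuity_pt_x_z t z : 0 < t -> 0 < z < 1 -> continuity_pt (x t) z.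
Proof. intros. eapply is_derive_continuity_pt, is_derive_x_z; auto. Qed.

Lemma continuity_pt_powP_x_z t z : 0 < t -> 0 < z < 1 -> continuity_pt (fun w => powP p (x t w)) z.
Proof.
  intros. apply (continuity_pt_comp (x t) (powP p));
    [apply continuity_pt_x_z | apply continuity_pt_powP]; auto.
Qed.

Lemma ex_RInt_powP_x s u v : 0 <= s -> 0 <= u -> u <= v -> v <= 1 ->
  ex_RInt (fun z => powP p (x s z)) u v.
Proof.
  intros Hs Hu Huv Hv. apply ex_RInt_cont_within; auto. intros z Hz eps Heps.
  assert (Hxs : cont_within 0 1 (x s) z).
  { intros e He. assert (Hz01 : 0 <= z <= 1) by lra.
    destruct (Hcont s z (conj Hs Hz01) e He) as [d [Hd Hf]].
    exists d. split; auto. intros w Hw Hwz. apply Hf; auto. rewrite Rminus_diag, Rabs_R0; auto. }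
  destruct (cont_within_comp (powP p) (x s) 0 1 z (continuity_pt_powP p _ Hp) Hxs eps Heps)
    as [d [Hd Hf]].
  exists d; split; auto. intros w Hw Hwz. apply Hf; auto; lra.
Qed.

Definition energy (s : R) : R := RInt (fun z => powP p (x s z)) 0 1.

Lemma energy_nonneg s : 0 <= s -> 0 <= energy s.
Proof.
  intros Hs. apply RInt_ge_0; [lra | apply ex_RInt_powP_x; lra |]. intros; apply powP_nonneg.
Qed.

Definition parabola_bounded (B s : R) : Prop :=
  forall z, 0 <= z <= 1 -> Rabs (x s z) <= B * z * (1 - z).

Lemma x_parabola_bound t1 t2 : 0 < t1 -> t1 <= t2 ->
  exists B, 0 < B /\ forall s, t1 <= s <= t2 -> parabola_bounded B s.
Proof.
  intros Ht1 Ht12.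
  destruct (C2_01_parabola_bound (x t1) (HC2 t1 ltac:(lra)) (Hbc0 t1 ltac:(lra))
              (Hbc1 t1 ltac:(lra))) as [B [HB HBz]].
  exists B. split; auto. intros s Hs z Hz. apply Rabs_le.
  assert (HBz' : forall w, 0 <= w <= 1 -> - (B * w * (1 - w)) <= x t1 w <= B * w * (1 - w))
    by (intros w Hw; apply Rabs_le_between, HBz, Hw).
  assert (Hupper := parabola_barrier_persists a x xt xz xzz Ha Hcont is_derive_x_t is_derive_x_z
    is_derive_xz_z Hheat Hbc0 Hbc1 B t1 t2 HB Ht1 Ht12 (fun w Hw => proj2 (HBz' w Hw)) s z Hs Hz).
  assert (Hcont' : cont2_on (fun t z => 0 <= t /\ 0 <= z <= 1) (fun t z => - x t z)).
  { intros t w Htw eps Heps. destruct (Hcont t w Htw eps Heps) as [d [Hd Hf]].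
    exists d; split; auto. intros s' w' Hsw Hs' Hw'. rewrite <- Rabs_Ropp.
    replace (- (- x s' w' - - x t w)) with (x s' w' - x t w) by ring. auto. }
  assert (Hlower := parabola_barrier_persists a (fun t z => - x t z) (fun t z => - xt t z)
    (fun t z => - xz t z) (fun t z => - xzz t z) Ha Hcont'
    (fun t w Ht Hw => is_derive_opp (fun s => x s w) _ _ (is_derive_x_t t w Ht Hw))
    (fun t w Ht Hw => is_derive_opp (fun s => x t s) _ _ (is_derive_x_z t w Ht Hw))
    (fun t w Ht Hw => is_derive_opp (fun s => xz t s) _ _ (is_derive_xz_z t w Ht Hw))
    ltac:(intros t w Ht Hw; simpl; rewrite Hheat; auto; ring)
    ltac:(intros t Ht; simpl; rewrite Hbc0; auto; ring)
    ltac:(intros t Ht; simpl; rewrite Hbc1; auto; ring)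
    B t1 t2 HB Ht1 Ht12 ltac:(intros w Hw; specialize (HBz' w Hw); simpl; lra) s z Hs Hz).
  simpl in Hlower. lra.
Qed.

Lemma continuity_2d_pt_x t z : 0 < t -> 0 < z < 1 -> continuity_2d_pt x t z.
Proof. intros. apply (cont2_on_interior _ x t z Hcont); auto. intros; lra. Qed.

Lemma continuity_2d_pt_xt t z : 0 < t -> 0 < z < 1 -> continuity_2d_pt xt t z.
Proof. intros. apply (cont2_on_interior _ xt t z Hcxt); auto. Qed.

Lemma continuity_pt_xt_z t z : 0 < t -> 0 < z < 1 -> continuity_pt (xt t) z.
Proof. intros. apply continuity_2d_pt_slice, continuity_2d_pt_xt; auto. Qed.

Lemma continuity_pt_xzz_z t z : 0 < t -> 0 < z < 1 -> continuity_pt (xzz t) z.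
Proof.
  intros. apply continuity_2d_pt_slice, (cont2_on_interior _ xzz t z Hcxzz); auto.
Qed.

Lemma continuity_pt_xz_z t z : 0 < t -> 0 < z < 1 -> continuity_pt (xz t) z.
Proof. intros. eapply is_derive_continuity_pt, is_derive_xz_z; auto. Qed.

Lemma continuity_pt_powW_x_z t z : 0 < t -> 0 < z < 1 -> continuity_pt (fun w => powW p (x t w)) z.
Proof.
  intros. apply (continuity_pt_comp (x t) (powW p));
    [apply continuity_pt_x_z | apply continuity_pt_powW]; auto.
Qed.

Lemma continuity_pt_powV_x_z t z : 0 < t -> 0 < z < 1 -> continuity_pt (fun w => powV p (x t w)) z.
Proof.
  intros. apply (continuity_pt_comp (x t) (powV p));
    [apply continuity_pt_x_z | apply continuity_pt_powV]; auto.
Qed.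

Ltac solution_leaf :=
  first [ apply continuity_pt_powP_x_z | apply continuity_pt_powV_x_z
        | apply continuity_pt_powW_x_z | apply continuity_pt_x_z | apply continuity_pt_xz_z
        | apply continuity_pt_xzz_z | apply continuity_pt_xt_z | apply continuity_pt_picot ]; lra.

Definition mu : R := 4 * a * (p - 1) / p.
Definition lam : R := mu * PI ^ 2.

Lemma mu_pos : 0 < mu.
Proof. unfold mu. apply Rdiv_lt_0_compat; nra. Qed.

Lemma lam_pos : 0 < lam.
Proof. unfold lam. pose proof mu_pos. pose proof PI_RGT_0. apply Rmult_lt_0_compat; auto. nra. Qed.

Definition wenergy (c0 c1 al be s : R) : R :=
  RInt (fun z => (c0 + c1 * z) * powP p (x s z)) al be.
Definition wenergy_t (c0 c1 al be s : R) : R :=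
  RInt (fun z => (c0 + c1 * z) * (p * powV p (x s z) * xt s z)) al be.

Lemma is_derive_weighted_powP_x_t c0 c1 u z : 0 < u -> 0 < z < 1 ->
  is_derive (fun u => (c0 + c1 * z) * powP p (x u z)) u
    ((c0 + c1 * z) * (p * powV p (x u z) * xt u z)).
Proof.
  intros Hu Hz. assert (H1 := is_derive_x_t u z Hu Hz). assert (H2 := is_derive_powP p (x u z) Hp).
  auto_derive; [repeat split; eexists; first [exact H1 | exact H2]|].
  rewrite_Derive H1. rewrite_Derive H2. ring.
Qed.

Lemma ex_RInt_weighted_powP_x c0 c1 s al be : 0 < s -> 0 < al -> al <= be -> be < 1 ->
  ex_RInt (fun z => (c0 + c1 * z) * powP p (x s z)) al be.
Proof.
  intros Hs Hal Hab Hbe. apply ex_RInt_continuity_pt; auto. intros z Hz.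
  continuity_pt_arith ltac:(apply continuity_pt_powP_x_z; lra).
Qed.

Lemma is_derive_wenergy c0 c1 al be s : 0 < s -> 0 < al -> al <= be -> be < 1 ->
  is_derive (wenergy c0 c1 al be) s (wenergy_t c0 c1 al be s).
Proof.
  intros Hs Hal Hab Hbe. unfold wenergy, wenergy_t.
  assert (Hs_loc : locally s (fun u => 0 < u))
    by (apply (locally_interval _ _ 0 p_infty); simpl; auto).
  eapply is_derive_eq.
  - apply (is_derive_RInt_param (fun u z => (c0 + c1 * z) * powP p (x u z))).
    + apply (filter_imp (fun u => 0 < u)); auto. intros u Hu t Ht.
      rewrite Rmin_left, Rmax_right in Ht by auto.
      eexists. apply is_derive_weighted_powP_x_t; lra.
    + intros t Ht. rewrite Rmin_left, Rmax_right in Ht by auto.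
      apply continuity_2d_pt_ext_loc
        with (fun u v => (c0 + c1 * v) * (p * powV p (x u v) * xt u v)).
      * apply locally_2d_impl with (fun u v => 0 < u /\ 0 < v < 1);
          [apply locally_2d_forall | apply locally_2d_interior; lra].
        intros u v [Hu Hv]. symmetry. apply is_derive_unique, is_derive_weighted_powP_x_t; auto.
      * apply continuity_2d_pt_mult.
        -- apply continuity_2d_pt_plus; [apply continuity_2d_pt_const|].
           apply continuity_2d_pt_mult; [apply continuity_2d_pt_const | apply continuity_2d_pt_id2].
        -- apply continuity_2d_pt_mult; [apply continuity_2d_pt_mult|].
           ++ apply continuity_2d_pt_const.
           ++ apply (continuity_1d_2d_pt_comp (powV p) x);
                [apply continuity_pt_powV; auto | apply continuity_2d_pt_x; lra].
           ++ apply continuity_2d_pt_xt; lra.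
    + apply (filter_imp (fun u => 0 < u)); auto. intros u Hu.
      apply ex_RInt_weighted_powP_x; auto.
  - apply RInt_ext. intros z Hz. rewrite Rmin_left, Rmax_right in Hz by auto.
    apply is_derive_unique, is_derive_weighted_powP_x_t; lra.
Qed.

(* flux_defect collects the terms produced by the slope c1 of the weight. *)
Definition flux (c0 c1 s z : R) : R :=
  a * p * (c0 + c1 * z) * powV p (x s z) * xz s z
  - a * c1 * powP p (x s z) - mu * (c0 + c1 * z) * picot z * powP p (x s z).
Definition flux_z (c0 c1 s z : R) : R :=
  a * p * (c1 * powV p (x s z) * xz s z
           + (c0 + c1 * z) * ((p - 1) * powW p (x s z) * xz s z) * xz s z
           + (c0 + c1 * z) * powV p (x s z) * xzz s z)
  - a * c1 * (p * powV p (x s z) * xz s z)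
  - mu * (c1 * picot z * powP p (x s z)
          + (c0 + c1 * z) * (- PI ^ 2 - picot z * picot z) * powP p (x s z)
          + (c0 + c1 * z) * picot z * (p * powV p (x s z) * xz s z)).
Definition flux_defect (c1 s z : R) : R := mu * c1 * picot z * powP p (x s z).

Lemma is_derive_flux c0 c1 s z : 0 < s -> 0 < z < 1 ->
  is_derive (flux c0 c1 s) z (flux_z c0 c1 s z).
Proof.
  intros Hs Hz. unfold flux, flux_z.
  assert (D1 := is_derive_x_z s z Hs Hz). assert (D2 := is_derive_xz_z s z Hs Hz).
  assert (D3 := is_derive_powV p (x s z) Hp). assert (D4 := is_derive_powP p (x s z) Hp).
  assert (D5 := is_derive_picot z Hz).
  auto_derive;
    [repeat split; eexists; first [exact D1 | exact D2 | exact D3 | exact D4 | exact D5]|].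
  rewrite_Derive D1. rewrite_Derive D2. rewrite_Derive D3. rewrite_Derive D4. rewrite_Derive D5.
  ring.
Qed.

(* The pointwise inequality behind Wirtinger's inequality: the gap is
   (c0 + c1 z) |x|^(p-2) mu (p/2 x_z - picot z x)^2 >= 0. *)
Lemma dissipation_le_flux_z c0 c1 s z : 0 < s -> 0 < z < 1 -> 0 <= c0 + c1 * z ->
  (c0 + c1 * z) * (p * powV p (x s z) * xt s z) + lam * ((c0 + c1 * z) * powP p (x s z))
  <= flux_z c0 c1 s z + flux_defect c1 s z.
Proof.
  intros Hs Hz Hw. rewrite Hheat by auto. unfold flux_z, flux_defect, lam, powP, powV.
  pose proof (powW_nonneg p (x s z)). pose proof mu_pos.
  set (W := powW p (x s z)) in *. set (X := x s z). set (X1 := xz s z). set (X2 := xzz s z).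
  set (K := picot z). set (w := c0 + c1 * z) in *.
  assert (Hsq : 0 <= w * W * mu * ((p / 2) * X1 - K * X) ^ 2)
    by (apply Rmult_le_pos; [|apply pow2_ge_0]; apply Rmult_le_pos; [apply Rmult_le_pos|]; lra).
  enough (E : a * p * (c1 * (W * X) * X1 + w * ((p - 1) * W * X1) * X1 + w * (W * X) * X2)
      - a * c1 * (p * (W * X) * X1)
      - mu * (c1 * K * (W * X * X) + w * (- PI ^ 2 - K * K) * (W * X * X)
              + w * K * (p * (W * X) * X1))
      + mu * c1 * K * (W * X * X) - (w * (p * (W * X) * (a * X2)) + mu * PI ^ 2 * (w * (W * X * X)))
      = w * W * mu * ((p / 2) * X1 - K * X) ^ 2) by lra.
  unfold mu. field. lra.
Qed.

Lemma ex_RInt_flux_defect c1 s al be : 0 < s -> 0 < al -> al <= be -> be < 1 ->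
  ex_RInt (flux_defect c1 s) al be.
Proof.
  intros. apply ex_RInt_continuity_pt; auto.
  intros z Hz. unfold flux_defect. continuity_pt_arith solution_leaf.
Qed.

Lemma is_RInt_wenergy_dissipation c0 c1 al be s : 0 < s -> 0 < al -> al <= be -> be < 1 ->
  is_RInt (fun z => (c0 + c1 * z) * (p * powV p (x s z) * xt s z)
                    + lam * ((c0 + c1 * z) * powP p (x s z))) al be
    (wenergy_t c0 c1 al be s + lam * wenergy c0 c1 al be s).
Proof.
  intros Hs Hal Hab Hbe.
  apply (is_RInt_plus (V := R_NormedModule)); [|apply (is_RInt_scal (V := R_NormedModule))];
    apply is_RInt_continuity_pt; auto;
    intros z Hz; continuity_pt_arith solution_leaf.
Qed.

Lemma is_RInt_flux_balance c0 c1 al be s : 0 < s -> 0 < al -> al <= be -> be < 1 ->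
  is_RInt (fun z => flux_z c0 c1 s z + flux_defect c1 s z) al be
    (flux c0 c1 s be - flux c0 c1 s al + RInt (flux_defect c1 s) al be).
Proof.
  intros Hs Hal Hab Hbe.
  apply (is_RInt_plus (V := R_NormedModule));
    [|apply (@RInt_correct R_CompleteNormedModule), ex_RInt_flux_defect; auto].
  apply (is_RInt_derive (flux c0 c1 s)); intros z Hz; rewrite Rmin_left, Rmax_right in Hz by auto.
  - apply is_derive_flux; lra.
  - apply (proj1 (continuity_pt_filterlim _ _)). unfold flux_z. continuity_pt_arith solution_leaf.
Qed.

Lemma wenergy_dissipation c0 c1 al be s : 0 < s -> 0 < al -> al <= be -> be < 1 ->
  (forall z, al <= z <= be -> 0 <= c0 + c1 * z) ->
  wenergy_t c0 c1 al be s + lam * wenergy c0 c1 al be s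
  <= flux c0 c1 s be - flux c0 c1 s al + RInt (flux_defect c1 s) al be.
Proof.
  intros Hs Hal Hab Hbe Hw.
  apply (is_RInt_le _ _ al be _ _ Hab (is_RInt_wenergy_dissipation c0 c1 al be s Hs Hal Hab Hbe)
           (is_RInt_flux_balance c0 c1 al be s Hs Hal Hab Hbe)).
  intros z Hz. apply dissipation_le_flux_z; auto; [lra | apply Hw; lra].
Qed.

Lemma parabola_bounded_left B s z : 0 < B -> parabola_bounded B s -> 0 <= z <= 1 ->
  Rabs (x s z) <= B * z.
Proof.
  intros HB Hbar Hz. eapply Rle_trans; [apply Hbar, Hz|]. pose proof (Rmult_le_pos B z). nra.
Qed.

Lemma parabola_bounded_right B s z : 0 < B -> parabola_bounded B s -> 0 <= z <= 1 ->
  Rabs (x s z) <= B * (1 - z).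
Proof.
  intros HB Hbar Hz. eapply Rle_trans; [apply Hbar, Hz|]. pose proof (Rmult_le_pos B (1 - z)). nra.
Qed.

(* The energy against the trapezoidal cutoff which vanishes on [0, eta/2] and
   [1 - eta/2, 1], equals 1 on [eta, 1 - eta] and is affine in between. *)
Definition cut_energy (eta s : R) : R :=
  wenergy (-1) (2 / eta) (eta / 2) eta s + wenergy 1 0 eta (1 - eta) s
  + wenergy (2 / eta - 1) (- 2 / eta) (1 - eta) (1 - eta / 2) s.
Definition cut_energy_t (eta s : R) : R :=
  wenergy_t (-1) (2 / eta) (eta / 2) eta s + wenergy_t 1 0 eta (1 - eta) s
  + wenergy_t (2 / eta - 1) (- 2 / eta) (1 - eta) (1 - eta / 2) s.

Lemma cutoff_left_weight eta z : 0 < eta -> eta / 2 <= z <= eta -> 0 <= -1 + 2 / eta * z <= 1.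
Proof.
  intros He Hz. assert (Hk : 2 / eta * eta = 2) by (field; lra).
  assert (0 < 2 / eta) by (apply Rdiv_lt_0_compat; lra). split; nra.
Qed.

Lemma cutoff_right_weight eta z : 0 < eta -> 1 - eta <= z <= 1 - eta / 2 ->
  0 <= 2 / eta - 1 + - 2 / eta * z <= 1.
Proof.
  intros He Hz. replace (2 / eta - 1 + - 2 / eta * z) with (-1 + 2 / eta * (1 - z)) by (field; lra).
  apply cutoff_left_weight; lra.
Qed.

Lemma is_derive_cut_energy eta s : 0 < s -> 0 < eta <= 1 / 4 ->
  is_derive (cut_energy eta) s (cut_energy_t eta s).
Proof.
  intros Hs Heta. unfold cut_energy, cut_energy_t.
  assert (D1 := is_derive_wenergy (-1) (2 / eta) (eta / 2) eta s Hs
                  ltac:(lra) ltac:(lra) ltac:(lra)).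
  assert (D2 := is_derive_wenergy 1 0 eta (1 - eta) s Hs ltac:(lra) ltac:(lra) ltac:(lra)).
  assert (D3 := is_derive_wenergy (2 / eta - 1) (- 2 / eta) (1 - eta) (1 - eta / 2) s Hs
                  ltac:(lra) ltac:(lra) ltac:(lra)).
  auto_derive; [repeat split; eexists; first [exact D1 | exact D2 | exact D3]|].
  rewrite_Derive D1. rewrite_Derive D2. rewrite_Derive D3. ring.
Qed.

Lemma wenergy_bounds c0 c1 al be s : 0 < s -> 0 < al -> al <= be -> be < 1 ->
  (forall z, al <= z <= be -> 0 <= c0 + c1 * z <= 1) ->
  0 <= wenergy c0 c1 al be s <= RInt (fun z => powP p (x s z)) al be.
Proof.
  intros Hs Hal Hab Hbe Hw. unfold wenergy.
  assert (Hex := ex_RInt_weighted_powP_x c0 c1 s al be Hs Hal Hab Hbe).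
  split; [apply RInt_ge_0 | apply RInt_le]; auto; try (apply ex_RInt_powP_x; lra);
    intros z Hz; specialize (Hw z ltac:(lra)); pose proof (powP_nonneg p (x s z)); nra.
Qed.

Lemma cut_energy_sandwich B eta s : 0 < s -> 0 < B -> parabola_bounded B s ->
  0 < eta <= 1 / 4 -> B * eta <= 1 ->
  cut_energy eta s <= energy s <= cut_energy eta s + 2 * eta * B ^ 2.
Proof.
  intros Hs HB Hbar Heta HBe.
  set (g := fun z => powP p (x s z)).
  assert (eg : forall u v, 0 <= u -> u <= v -> v <= 1 -> ex_RInt g u v)
    by (intros; apply ex_RInt_powP_x; lra).
  assert (Hg : forall u v, 0 <= u -> u <= v -> v <= 1 -> 0 <= RInt g u v)
    by (intros; apply RInt_ge_0; auto; intros; apply powP_nonneg).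
  assert (E : energy s = RInt g 0 eta + RInt g eta (1 - eta) + RInt g (1 - eta) 1).
  { unfold energy. fold g. rewrite (RInt_Chasles_R g 0 eta 1), (RInt_Chasles_R g eta (1 - eta) 1)
      by (apply eg; lra). ring. }
  assert (EL : RInt g 0 eta = RInt g 0 (eta / 2) + RInt g (eta / 2) eta)
    by (apply RInt_Chasles_R; apply eg; lra).
  assert (ER : RInt g (1 - eta) 1 = RInt g (1 - eta) (1 - eta / 2) + RInt g (1 - eta / 2) 1)
    by (apply RInt_Chasles_R; apply eg; lra).
  assert (WL := wenergy_bounds (-1) (2 / eta) (eta / 2) eta s Hs ltac:(lra) ltac:(lra) ltac:(lra)
                  ltac:(intros; apply cutoff_left_weight; lra)).
  assert (WR := wenergy_bounds (2 / eta - 1) (- 2 / eta) (1 - eta) (1 - eta / 2) s Hs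
                  ltac:(lra) ltac:(lra) ltac:(lra) ltac:(intros; apply cutoff_right_weight; lra)).
  assert (WM : wenergy 1 0 eta (1 - eta) s = RInt g eta (1 - eta)).
  { apply RInt_ext. intros z _. change ((1 + 0 * z) * powP p (x s z) = powP p (x s z)). ring. }
  assert (IL : RInt g 0 eta <= (eta - 0) * B ^ 2).
  { apply RInt_le_const; [lra | apply eg; lra |]. intros z Hz.
    apply Rle_trans with ((B * z) * (B * z)); [|assert (z * z <= 1) by nra; nra].
    apply powP_le_sqr; [auto | apply parabola_bounded_left; auto; lra | nra]. }
  assert (IR : RInt g (1 - eta) 1 <= (1 - (1 - eta)) * B ^ 2).
  { apply RInt_le_const; [lra | apply eg; lra |]. intros z Hz.
    apply Rle_trans with ((B * (1 - z)) * (B * (1 - z)));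
      [|assert ((1 - z) * (1 - z) <= 1) by nra; nra].
    apply powP_le_sqr; [auto | apply parabola_bounded_right; auto; lra | nra]. }
  pose proof (Hg 0 (eta / 2) ltac:(lra) ltac:(lra) ltac:(lra)).
  pose proof (Hg (1 - eta / 2) 1 ltac:(lra) ltac:(lra) ltac:(lra)).
  unfold cut_energy. rewrite E, WM. fold g in WL, WR. lra.
Qed.

Lemma flux_telescope eta s : 0 < eta ->
  flux (-1) (2 / eta) s eta - flux (-1) (2 / eta) s (eta / 2)
  + (flux 1 0 s (1 - eta) - flux 1 0 s eta)
  + (flux (2 / eta - 1) (- 2 / eta) s (1 - eta / 2) - flux (2 / eta - 1) (- 2 / eta) s (1 - eta))
  = 2 * a / eta * (powP p (x s (eta / 2)) - powP p (x s eta)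
                   - powP p (x s (1 - eta)) + powP p (x s (1 - eta / 2))).
Proof. intros. unfold flux. field. lra. Qed.

Lemma defect_left_le B eta s : 0 < s -> 0 < B -> B * eta <= 1 -> parabola_bounded B s ->
  0 < eta <= 1 / 4 -> RInt (flux_defect (2 / eta) s) (eta / 2) eta <= 2 * mu * B ^ 2 * eta.
Proof.
  intros Hs HB HBe Hbar Heta. pose proof mu_pos.
  assert (Hc : 0 < mu * (2 / eta)) by (apply Rmult_lt_0_compat; auto; apply Rdiv_lt_0_compat; lra).
  apply Rle_trans with ((eta - eta / 2) * (mu * (2 / eta) * (2 * B ^ 2 * eta)));
    [|right; field; lra].
  apply RInt_le_const; [lra | apply ex_RInt_flux_defect; lra |]. intros z Hz.
  unfold flux_defect. rewrite Rmult_assoc. apply Rmult_le_compat_l; [lra|].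
  apply (picot_powP_le p B eta); auto; try lra. apply parabola_bounded_left; auto; lra.
Qed.

Lemma defect_right_le B eta s : 0 < s -> 0 < B -> B * eta <= 1 -> parabola_bounded B s ->
  0 < eta <= 1 / 4 ->
  RInt (flux_defect (- 2 / eta) s) (1 - eta) (1 - eta / 2) <= 2 * mu * B ^ 2 * eta.
Proof.
  intros Hs HB HBe Hbar Heta. pose proof mu_pos.
  assert (Hc : 0 < mu * (2 / eta)) by (apply Rmult_lt_0_compat; auto; apply Rdiv_lt_0_compat; lra).
  apply Rle_trans with ((1 - eta / 2 - (1 - eta)) * (mu * (2 / eta) * (2 * B ^ 2 * eta)));
    [|right; field; lra].
  apply RInt_le_const; [lra | apply ex_RInt_flux_defect; lra |]. intros z Hz.
  unfold flux_defect. rewrite picot_sym.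
  replace (mu * (- 2 / eta) * - picot (1 - z) * powP p (x s z))
    with (mu * (2 / eta) * (picot (1 - z) * powP p (x s z))) by (field; lra).
  apply Rmult_le_compat_l; [lra|].
  apply (picot_powP_le p B eta); auto; try lra. apply parabola_bounded_right; auto; lra.
Qed.

Lemma cut_energy_growth B eta s : 0 < s -> 0 < B -> parabola_bounded B s ->
  0 < eta <= 1 / 4 -> B * eta <= 1 ->
  cut_energy_t eta s + lam * cut_energy eta s <= (a * B ^ 2 + 4 * mu * B ^ 2) * eta.
Proof.
  intros Hs HB Hbar Heta HBe.
  assert (DL := wenergy_dissipation (-1) (2 / eta) (eta / 2) eta s Hs ltac:(lra) ltac:(lra)
                  ltac:(lra) ltac:(intros; apply cutoff_left_weight; lra)).
  assert (DM := wenergy_dissipation 1 0 eta (1 - eta) s Hs ltac:(lra) ltac:(lra) ltac:(lra)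
                  ltac:(intros; lra)).
  assert (DR := wenergy_dissipation (2 / eta - 1) (- 2 / eta) (1 - eta) (1 - eta / 2) s Hs
                  ltac:(lra) ltac:(lra) ltac:(lra) ltac:(intros; apply cutoff_right_weight; lra)).
  assert (JM : RInt (flux_defect 0 s) eta (1 - eta) = 0).
  { rewrite (RInt_ext _ (fun _ => 0)), RInt_const; [apply Rmult_0_r|].
    intros z _. unfold flux_defect. change (mu * 0 * picot z * powP p (x s z) = 0). ring. }
  assert (JL := defect_left_le B eta s Hs HB HBe Hbar Heta).
  assert (JR := defect_right_le B eta s Hs HB HBe Hbar Heta).
  assert (Hbdry : 2 * a / eta * (powP p (x s (eta / 2)) - powP p (x s eta)
                    - powP p (x s (1 - eta)) + powP p (x s (1 - eta / 2))) <= a * B ^ 2 * eta).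
  { assert (h1 : powP p (x s (eta / 2)) <= (B * (eta / 2)) * (B * (eta / 2)))
      by (apply powP_le_sqr; auto; [apply parabola_bounded_left; auto; lra | nra]).
    assert (h2 : powP p (x s (1 - eta / 2)) <= (B * (eta / 2)) * (B * (eta / 2))).
    { apply powP_le_sqr; auto; [|nra].
      eapply Rle_trans; [apply (parabola_bounded_right B); auto; lra | right; ring]. }
    pose proof (powP_nonneg p (x s eta)). pose proof (powP_nonneg p (x s (1 - eta))).
    apply Rle_trans with (2 * a / eta * (2 * ((B * (eta / 2)) * (B * (eta / 2)))));
      [|right; field; lra].
    apply Rmult_le_compat_l; [apply Rlt_le, Rdiv_lt_0_compat|]; lra. }
  rewrite JM in DM. rewrite <- (flux_telescope eta s) in Hbdry by lra.
  unfold cut_energy_t, cut_energy. lra.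
Qed.

Lemma energy_decay_up_to B eta t1 t2 : 0 < t1 -> t1 < t2 -> 0 < B ->
  (forall s, t1 <= s <= t2 -> parabola_bounded B s) -> 0 < eta <= 1 / 4 -> B * eta <= 1 ->
  exp (lam * t2) * energy t2 <= exp (lam * t1) * energy t1
    + eta * (exp (lam * t2) * ((a * B ^ 2 + 4 * mu * B ^ 2) * (t2 - t1) + 2 * B ^ 2)).
Proof.
  intros Ht1 Ht12 HB Hbar Heta HBe. pose proof lam_pos. pose proof mu_pos.
  set (C := (a * B ^ 2 + 4 * mu * B ^ 2) * eta).
  assert (HC : 0 <= C) by (unfold C; apply Rmult_le_pos; nra).
  set (ecut := fun s => exp (lam * s) * cut_energy eta s).
  destruct (MVT_cor2 ecut (fun s => exp (lam * s) * (cut_energy_t eta s + lam * cut_energy eta s))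
              t1 t2 Ht12) as [c [Hmvt Hc]].
  { intros c Hc. apply is_derive_Reals. unfold ecut.
    assert (D := is_derive_cut_energy eta c ltac:(lra) Heta).
    auto_derive; [eexists; exact D|]. rewrite_Derive D. ring. }
  assert (Hgrowth := cut_energy_growth B eta c ltac:(lra) HB (Hbar c ltac:(lra)) Heta HBe).
  assert (Hexp : exp (lam * c) <= exp (lam * t2)) by (left; apply exp_increasing; nra).
  assert (Hslope : exp (lam * c) * (cut_energy_t eta c + lam * cut_energy eta c)
                   <= exp (lam * t2) * C).
  { apply Rle_trans with (exp (lam * c) * C);
      [apply Rmult_le_compat_l; [left; apply exp_pos | auto] | apply Rmult_le_compat_r; auto]. }
  destruct (cut_energy_sandwich B eta t1 Ht1 HB (Hbar t1 ltac:(lra)) Heta HBe) as [S1 _].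
  destruct (cut_energy_sandwich B eta t2 ltac:(lra) HB (Hbar t2 ltac:(lra)) Heta HBe) as [_ S2].
  pose proof (exp_pos (lam * t1)). pose proof (exp_pos (lam * t2)).
  assert (E1 : ecut t1 <= exp (lam * t1) * energy t1) by (unfold ecut; apply Rmult_le_compat_l; lra).
  assert (E2 : exp (lam * t2) * energy t2 <= ecut t2 + exp (lam * t2) * (2 * eta * B ^ 2)).
  { unfold ecut. rewrite <- Rmult_plus_distr_l. apply Rmult_le_compat_l; lra. }
  assert (E3 : (exp (lam * c) * (cut_energy_t eta c + lam * cut_energy eta c)) * (t2 - t1)
               <= exp (lam * t2) * C * (t2 - t1)) by (apply Rmult_le_compat_r; lra).
  unfold C in E3. nra.
Qed.

Lemma energy_decay_positive_times t1 t2 : 0 < t1 -> t1 <= t2 ->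
  exp (lam * t2) * energy t2 <= exp (lam * t1) * energy t1.
Proof.
  intros Ht1 Ht12. destruct (Req_dec t1 t2) as [<-|Hne]; [lra|].
  destruct (x_parabola_bound t1 t2 Ht1 Ht12) as [B [HB Hbar]].
  pose proof mu_pos. pose proof (exp_pos (lam * t2)).
  apply (le_of_le_plus_small_mul _ _
           (exp (lam * t2) * ((a * B ^ 2 + 4 * mu * B ^ 2) * (t2 - t1) + 2 * B ^ 2))
           (Rmin (1 / 4) (1 / B))).
  - apply Rmin_pos; [lra | apply Rdiv_lt_0_compat; lra].
  - apply Rmult_le_pos; [lra|]. apply Rplus_le_le_0_compat; [apply Rmult_le_pos|]; nra.
  - intros eta [He He0]. pose proof (Rmin_l (1 / 4) (1 / B)). pose proof (Rmin_r (1 / 4) (1 / B)).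
    apply energy_decay_up_to; auto; try lra.
    apply Rle_trans with (B * (1 / B)); [apply Rmult_le_compat_l; lra | right; field; lra].
Qed.

(* By uniform continuity of x on [0, d] x [0, 1]. *)
Lemma energy_upper_continuous_0 eps : 0 < eps ->
  exists d, 0 < d /\ forall s, 0 <= s < d -> energy s <= energy 0 + eps.
Proof.
  intros Heps.
  set (f := fun u v => powP p (x (Rmax 0 u) (clamp 0 1 v))).
  assert (Hf : forall u v, continuity_2d_pt f u v).
  { intros u v. apply (continuity_1d_2d_pt_comp (powP p) (fun u v => x (Rmax 0 u) (clamp 0 1 v)));
      [apply continuity_pt_powP; auto | apply continuity_2d_pt_clamp; auto; lra]. }
  destruct (uniform_continuity_2d_1d' f 0 1 0 (fun z _ => Hf 0 z) (mkposreal eps Heps)) as [d Hd].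
  exists d. split; [apply cond_pos|]. intros s Hs.
  assert (Hex : forall s, 0 <= s -> ex_RInt (fun z => powP p (x s z)) 0 1)
    by (intros; apply ex_RInt_powP_x; lra).
  apply Rle_trans with (RInt (fun z => powP p (x 0 z) + eps) 0 1).
  - apply RInt_le; [lra | apply Hex; lra | |].
    + apply (ex_RInt_plus (V := R_NormedModule)); [apply Hex; lra | apply ex_RInt_const].
    + intros z Hz.
      assert (Q := Hd z 0 z s ltac:(lra) ltac:(lra) ltac:(lra) ltac:(lra)
                   ltac:(rewrite Rminus_diag, Rabs_R0; apply cond_pos)).
      simpl in Q. unfold f in Q. rewrite clamp_id, !Rmax_right in Q by lra.
      apply Rabs_def2 in Q. lra.
  - rewrite (RInt_plus (V := R_CompleteNormedModule)), RInt_const;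
      [|apply Hex; lra | apply ex_RInt_const].
    change (energy 0 + (1 - 0) * eps <= energy 0 + eps). lra.
Qed.

(* Let s -> 0+ in the comparison between times s and t. *)
Lemma energy_decay t : 0 <= t -> exp (lam * t) * energy t <= energy 0.
Proof.
  intros Ht. destruct (Req_dec t 0) as [->|Hne]; [rewrite Rmult_0_r, exp_0; lra|].
  pose proof lam_pos. pose proof (energy_nonneg 0 ltac:(lra)) as HE0.
  apply Rle_plus_epsilon. intros eps Heps.
  set (d := eps / (2 * (energy 0 + eps))).
  assert (Hd : 0 < d) by (apply Rdiv_lt_0_compat; lra).
  assert (Hdd : d * (energy 0 + eps / 2) <= eps / 2).
  { apply Rle_trans with (d * (energy 0 + eps)); [apply Rmult_le_compat_l; lra|].
    right. unfold d. field. lra. }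
  destruct (energy_upper_continuous_0 (eps / 2) ltac:(lra)) as [d1 [Hd1 Hcont0]].
  destruct (exp_mul_le_1_plus lam d) as [s0 [Hs0 Hexp]]; auto.
  set (s := Rmin t (Rmin (d1 / 2) s0)).
  assert (Hs : 0 < s) by (repeat apply Rmin_pos; lra).
  pose proof (Rmin_l t (Rmin (d1 / 2) s0)). pose proof (Rmin_r t (Rmin (d1 / 2) s0)).
  pose proof (Rmin_l (d1 / 2) s0). pose proof (Rmin_r (d1 / 2) s0).
  assert (Hmono := energy_decay_positive_times s t Hs ltac:(unfold s in *; lra)).
  assert (Hes := Hcont0 s ltac:(unfold s in *; lra)).
  assert (Hexps := Hexp s ltac:(unfold s in *; lra)).
  pose proof (energy_nonneg s ltac:(lra)). pose proof (exp_pos (lam * s)).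
  assert (exp (lam * s) * energy s <= (1 + d) * (energy 0 + eps / 2))
    by (apply Rmult_le_compat; lra).
  nra.
Qed.

End HeatEnergy.

(** * The L^p bound *)

Lemma RInt01_RInt f : ex_RInt f 0 1 -> RInt01 f = RInt f 0 1.
Proof.
  intros Hf. unfold RInt01. destruct excluded_middle_informative as [i|n].
  - rewrite (RInt_Reals f 0 1 (epsilon i (fun _ => True))). reflexivity.
  - exfalso. apply n. constructor. apply ex_RInt_Reals_0, Hf.
Qed.

Lemma Lpnorm_powP g p : 2 < p -> ex_RInt (fun z => powP p (g z)) 0 1 ->
  Lpnorm g p = rpow (RInt (fun z => powP p (g z)) 0 1) (1 / p).
Proof.
  intros Hp Hg. unfold Lpnorm. f_equal.
  rewrite RInt01_RInt; [apply RInt_ext; intros; apply rpow_abs_eq_powP; auto|].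
  apply (ex_RInt_ext (V := R_NormedModule) (fun z => powP p (g z))); auto.
  intros; symmetry; apply rpow_abs_eq_powP; auto.
Qed.

Lemma rpow_le_exp_mul G G0 q c : 0 < q -> 0 <= G -> G <= exp c * G0 ->
  rpow G q <= exp (q * c) * rpow G0 q.
Proof.
  intros Hq HG Hle. pose proof (exp_pos c).
  destruct (Req_dec G 0) as [->|HG0].
  - unfold rpow at 1. destruct (Rlt_dec 0 0); [lra|].
    apply Rmult_le_pos; [left; apply exp_pos | apply rpow_nonneg].
  - assert (G0pos : 0 < G0) by (destruct (Rle_lt_dec G0 0); nra).
    unfold rpow. destruct (Rlt_dec 0 G); [|lra]. destruct (Rlt_dec 0 G0); [|lra].
    apply Rle_trans with (Rpower (exp c * G0) q); [apply Rle_Rpower_l; lra|].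
    rewrite <- Rpower_mult_distr by lra. right. f_equal.
    unfold Rpower. rewrite ln_exp, Rmult_comm. reflexivity.
Qed.

Theorem mainTheorem8 (a p : R) (x : R -> R -> R) (x0 : R -> R)
  (xt xz xzz : R -> R -> R)
  (Ha : 0 < a) (Hp : 2 < p)
  (Hcont : cont2_on (fun t z => 0 <= t /\ 0 <= z <= 1) x)
  (Hxt : forall t z, 0 < t -> 0 < z < 1 -> derivable_pt_lim (fun s => x s z) t (xt t z))
  (Hxz : forall t z, 0 < t -> 0 < z < 1 -> derivable_pt_lim (fun w => x t w) z (xz t z))
  (Hxzz : forall t z, 0 < t -> 0 < z < 1 -> derivable_pt_lim (fun w => xz t w) z (xzz t z))
  (Hcxt : cont2_on (fun t z => 0 < t /\ 0 < z < 1) xt)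
  (Hcxz : cont2_on (fun t z => 0 < t /\ 0 < z < 1) xz)
  (Hcxzz : cont2_on (fun t z => 0 < t /\ 0 < z < 1) xzz)
  (HC2 : forall t, 0 <= t -> C2_01 (x t))
  (Hheat : forall t z, 0 < t -> 0 < z < 1 -> xt t z = a * xzz t z)
  (Hbc0 : forall t, 0 <= t -> x t 0 = 0)
  (Hbc1 : forall t, 0 <= t -> x t 1 = 0)
  (Hx0 : C2_01 x0)
  (Hinit : forall z, 0 <= z <= 1 -> x 0 z = x0 z) :
  forall t, 0 <= t ->
    Lpnorm (x t) p <= exp (- (a * (p - 1) * (4 * PI ^ 2 / p ^ 2) * t)) * Lpnorm x0 p.
Proof.
  intros t Ht.
  assert (Hdecay := energy_decay a p x xt xz xzz Ha Hp Hcont Hxt Hxz Hxzz Hcxt Hcxzz HC2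
                      Hheat Hbc0 Hbc1 t Ht).
  assert (Hex : forall s, 0 <= s -> ex_RInt (fun z => powP p (x s z)) 0 1)
    by (intros s Hs; apply (ex_RInt_powP_x p x Hp Hcont); lra).
  assert (Hsame : forall z, Rmin 0 1 < z < Rmax 0 1 -> powP p (x 0 z) = powP p (x0 z))
    by (intros z Hz; rewrite Rmin_left, Rmax_right in Hz by lra; rewrite Hinit; auto; lra).
  rewrite (Lpnorm_powP (x t) p Hp (Hex t Ht)), (Lpnorm_powP x0 p Hp) by
    (apply (ex_RInt_ext (V := R_NormedModule) _ _ _ _ Hsame), Hex; lra).
  rewrite <- (RInt_ext _ _ _ _ Hsame).
  replace (- (a * (p - 1) * (4 * PI ^ 2 / p ^ 2) * t)) with (1 / p * - (lam a p * t))
    by (unfold lam, mu; field; lra).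
  apply rpow_le_exp_mul; [apply Rdiv_lt_0_compat; lra | apply (energy_nonneg p x Hp Hcont t Ht)|].
  change (energy p x t <= exp (- (lam a p * t)) * energy p x 0).
  apply Rmult_le_reg_l with (exp (lam a p * t)); [apply exp_pos|].
  rewrite <- Rmult_assoc, <- exp_plus, Rplus_opp_r, exp_0, Rmult_1_l. exact Hdecay.
Qed.
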